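(* Let $(G,\mathcal{P})$ and $(H,\mathcal{Q})$ be group pairs with finite generating sets $S$ of $G$ and $T$ of $H$. If $(G,\mathcal{P})$ is a quasi-retract of $(H,\mathcal{Q})$ and $\hat\Gamma(H,\mathcal{Q},T)$ is coarsely unicone simply-connected, then $\hat\Gamma(G,\mathcal{P},S)$ is coarsely unicone simply-connected.
   Context: A group pair $(G,\mathcal{P})$: $G$ finitely generated, $\mathcal{P}$ a non-empty finite collection of subgroups (repetitions allowed); $G/\mathcal{P}=\coprod_{P\in\mathcal{P}}G/P$, elements viewed as cosets (subsets of $G$). The coned-off Cayley graph $\hat\Gamma(G,\mathcal{P},S)$ has vertex set $G\sqcup G/\mathcal{P}$, edges $\{g,g'\}$ for $g^{-1}g'\in S$ and $\{g,A\}$ for $g\in A\in G/\mathcal{P}$; vertices in $G/\mathcal{P}$ are cone vertices. An edge loop of length $l$ is a vertex sequence $v_1,\dots,v_l$ with $\{v_i,v_{i+1}\}$ and $\{v_l,v_1\}$ edges; it is unicone if it has at most one cone vertex. $\hat\Gamma_l$ is the 2-complex obtained by attaching a 2-cell along each unicone loop of length $<l$; the graph is coarsely unicone simply-connected if some $\hat\Gamma_l$ is simply-connected. With word metrics, $f$ is $(L,C)$-Lipschitz if $d(f(x),f(x'))\le L\,d(x,x')+C$. For $L\ge1,C\ge0,M\ge0$, an $(L,C,M)$-Lipschitz map of pairs $f=(f_1,f_2)$ is an $(L,C)$-Lipschitz $f_1\colon G\to H$ and $f_2\colon G/\mathcal{P}\to H/\mathcal{Q}$ with Hausdorff distance between $f_1(A)$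 and $f_2(A)$ less than $M$ for all $A$. An $(L,C,M)$-quasi-retraction of pairs $(f,r)$ consists of such $f\colon(G,\mathcal{P})\to(H,\mathcal{Q})$, $r\colon(H,\mathcal{Q})\to(G,\mathcal{P})$ with $d_G(r_1f_1(g),g)\le C$ for all $g$ and $r_2\circ f_2=\mathrm{id}$; $(G,\mathcal{P})$ is a quasi-retract of $(H,\mathcal{Q})$ if such $(f,r)$ exists for some constants. *)

From Stdlib Require Import Reals List Relations ClassicalEpsilon FinFun.
Import ListNotations.
Open Scope R_scope.

Set Implicit Arguments.
Unset Strict Implicit.

Record group := Group {
  gcar :> Type;
  gmul : gcar -> gcar -> gcar;
  gone : gcar;
  ginv : gcar -> gcar;
  gassoc : forall x y z, gmul x (gmul y z) = gmul (gmul x y) z;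
  gone_l : forall x, gmul gone x = x;
  ginv_l : forall x, gmul (ginv x) x = gone
}.
Arguments gmul {g}. Arguments gone {g}. Arguments ginv {g}.

Record subgroup (G : group) := Subgroup {
  sg :> G -> Prop;
  sg_one : sg gone;
  sg_mul : forall x y, sg x -> sg y -> sg (gmul x y);
  sg_inv : forall x, sg x -> sg (ginv x)
}.

Definition wprod (G : group) (w : list G) : G := fold_right gmul gone w.

Definition letter (G : group) (S : list G) (s : G) : Prop :=
  In s S \/ In (ginv s) S.

Definition generates (G : group) (S : list G) : Prop :=
  forall g : G, exists w, Forall (letter S) w /\ wprod w = g.

Definition wordlen (G : group) (S : list G) (n : nat) (x y : G) : Prop :=
  exists w, length w = n /\ Forall (letter S) w /\ wprod w = gmul (ginv x) y.

(** word metric d_S(x,y): the least such n (well defined when S generates G) *)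
Definition wdist (G : group) (S : list G) (x y : G) : nat :=
  epsilon (inhabits 0%nat)
    (fun n => wordlen S n x y /\ forall m, wordlen S m x y -> (n <= m)%nat).

(** * Cosets: G/P = disjoint union over indices i of G/P_i; a coset is
      tagged by its index and viewed as a subset of G. *)
Definition coset (G : group) (I : Type) (P : I -> subgroup G) :=
  { c : I * (G -> Prop) |
    exists g : G, forall x, snd c x <-> P (fst c) (gmul (ginv g) x) }.

Definition cmem (G : group) (I : Type) (P : I -> subgroup G)
  (A : coset P) (g : G) : Prop := snd (proj1_sig A) g.

Definition lipschitz (G H : group) (S : list G) (T : list H)
  (L C : R) (f : G -> H) : Prop :=
  forall x x', INR (wdist T (f x) (f x')) <= L * INR (wdist S x x') + C.

(** Hausdorff distance (w.r.t. d_T) between X and Y is less than M.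
    Since word distances are natural numbers, sup/inf are attained,
    so this is the literal unfolding. *)
Definition hausdorff_lt (H : group) (T : list H) (X Y : H -> Prop) (M : R) :=
  (forall x, X x -> exists y, Y y /\ INR (wdist T x y) < M) /\
  (forall y, Y y -> exists x, X x /\ INR (wdist T x y) < M).

Definition image (G H : group) (f : G -> H) (A : G -> Prop) : H -> Prop :=
  fun h => exists g, A g /\ f g = h.

Definition lipschitz_pair (G H : group) (S : list G) (T : list H)
  (I J : Type) (P : I -> subgroup G) (Q : J -> subgroup H)
  (L C M : R) (f1 : G -> H) (f2 : coset P -> coset Q) : Prop :=
  1 <= L /\ 0 <= C /\ 0 <= M /\
  lipschitz S T L C f1 /\
  forall A : coset P, hausdorff_lt T (image f1 (cmem A)) (cmem (f2 A)) M.

Definition quasi_retraction_pair (G H : group) (S : list G) (T : list H)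
  (I J : Type) (P : I -> subgroup G) (Q : J -> subgroup H)
  (L C M : R) (f1 : G -> H) (f2 : coset P -> coset Q)
  (r1 : H -> G) (r2 : coset Q -> coset P) : Prop :=
  @lipschitz_pair G H S T I J P Q L C M f1 f2 /\
  @lipschitz_pair H G T S J I Q P L C M r1 r2 /\
  (forall g, INR (wdist S (r1 (f1 g)) g) <= C) /\
  (forall A, r2 (f2 A) = A).

Definition quasi_retract (G H : group) (S : list G) (T : list H)
  (I J : Type) (P : I -> subgroup G) (Q : J -> subgroup H) : Prop :=
  exists L C M f1 f2 r1 r2,
    @quasi_retraction_pair G H S T I J P Q L C M f1 f2 r1 r2.

Section Graph.
Variables (V : Type) (adj : V -> V -> Prop).

Fixpoint is_path (p : list V) : Prop :=
  match p with
  | x :: ((y :: _) as q) => adj x y /\ is_path q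
  | _ => True
  end.

Definition edge_loop (c : list V) : Prop :=
  match c with
  | [] => False
  | v :: _ => is_path c /\ adj (last c v) v
  end.

(** elementary homotopies of edge paths in the 2-complex obtained by
    attaching a 2-cell along every loop satisfying [cell] *)
Inductive hstep (cell : list V -> Prop) : list V -> list V -> Prop :=
| hstep_back : forall p q u v,
    is_path (p ++ u :: v :: u :: q) ->
    hstep cell (p ++ u :: v :: u :: q) (p ++ u :: q)
| hstep_cell : forall p q v c,
    cell (v :: c) ->
    is_path (p ++ v :: c ++ v :: q) ->
    hstep cell (p ++ v :: c ++ v :: q) (p ++ v :: q).

Definition simply_connected (cell : list V -> Prop) : Prop :=
  (forall u v, exists p, is_path (u :: p) /\ last (u :: p) u = v) /\
  (forall u p, is_path (u :: p) -> last (u :: p) u = u ->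
     clos_refl_sym_trans _ (hstep cell) (u :: p) [u]).
End Graph.

Definition cvertex (G : group) (I : Type) (P : I -> subgroup G) : Type :=
  (G + coset P)%type.

Definition cadj (G : group) (S : list G) (I : Type) (P : I -> subgroup G)
  (u v : cvertex P) : Prop :=
  match u, v with
  | inl g, inl g' => In (gmul (ginv g) g') S \/ In (gmul (ginv g') g) S
  | inl g, inr A => cmem A g
  | inr A, inl g => cmem A g
  | inr _, inr _ => False
  end.

Definition unicone (G : group) (I : Type) (P : I -> subgroup G)
  (c : list (cvertex P)) : Prop :=
  forall A B, In (inr A) c -> In (inr B) c -> A = B.

(** 2-cells of \hat\Gamma_l: unicone edge loops of length < l *)
Definition ucell (G : group) (S : list G) (I : Type) (P : I -> subgroup G)
  (l : nat) (c : list (cvertex P)) : Prop :=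
  edge_loop (cadj S (P:=P)) c /\ unicone c /\ (length c < l)%nat.

Definition coarsely_unicone_sc (G : group) (S : list G) (I : Type)
  (P : I -> subgroup G) : Prop :=
  exists l : nat, simply_connected (cadj S (P:=P)) (ucell S l).

(* Write phi = (f1, f2) and psi = (r1, r2) for the vertex maps between the coned-off
   Cayley graphs. As f and r are Lipschitz and move cosets by a bounded Hausdorff
   distance, each edge is sent to an edge path of bounded length all of whose vertices,
   except the endpoint, are group vertices; as r1 o f1 is close to the identity and
   r2 o f2 = id, each vertex x is joined to psi (phi x) by a bounded tether through group
   vertices. A loop in the graph of G is then homotopic, through a ladder of squares
   (an edge xy, the tethers at x and y and the psi phi-image of xy), to the conjugate of
   psi (phi loop) by a tether. Every square is short and contains no cone vertex other
   than x or y, which are not both cone vertices, so it is a unicone cell. Finally phi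
   of the loop bounds in the graph of H, and psi sends each backtrack or unicone 2-cell
   there to a short loop whose only cone vertex is the image of that of the cell. *)

From Stdlib Require Import Reals List Relations FinFun.
From Stdlib Require Import Lia Lra Classical ClassicalEpsilon Wf_nat.
Import ListNotations.
Set Implicit Arguments.
Unset Strict Implicit.
Local Open Scope nat_scope.

Local Ltac app_eq := repeat progress (simpl; rewrite <- ?app_assoc); reflexivity.

Section Paths.
Variables (V : Type) (adj : V -> V -> Prop).
Notation path := (is_path adj).

Lemma path_app l1 x l2 :
  path (l1 ++ x :: l2) <-> path (l1 ++ [x]) /\ path (x :: l2).
Proof.
  induction l1 as [|a [|b l1] IH]; simpl in *; tauto.
Qed.

Lemma last_cons_default (b : V) l d d' : last (b :: l) d = last (b :: l) d'.
Proof.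
  revert b; induction l as [|c l IH]; intros b; [reflexivity|exact (IH c)].
Qed.

Lemma last_glue (l1 l2 : list V) d : last (l1 ++ l2) d = last (last l1 d :: l2) d.
Proof.
  induction l2 as [|b l2 _] using rev_ind; [now rewrite app_nil_r|].
  rewrite app_assoc, last_last, app_comm_cons, last_last; reflexivity.
Qed.

Lemma last_cons_snoc (x : V) l y d : last (x :: l ++ [y]) d = y.
Proof. rewrite app_comm_cons; apply last_last. Qed.

Lemma cons_snoc_last (x : V) l : x :: l = removelast (x :: l) ++ [last (x :: l) x].
Proof. apply app_removelast_last; discriminate. Qed.

Lemma path_glue a l1 l2 :
  path (a :: l1) -> path (last (a :: l1) a :: l2) -> path (a :: l1 ++ l2).
Proof.
  induction l1 as [|b l1 _] using rev_ind; [tauto|].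
  intros H1 H2; rewrite app_comm_cons, last_last in H2.
  rewrite <- app_assoc; apply (path_app (a :: l1)); auto.
Qed.

Lemma path_snoc x m y :
  path (x :: m ++ [y]) <-> path (x :: m) /\ adj (last (x :: m) x) y.
Proof.
  induction m as [|b m _] using rev_ind; [simpl; tauto|].
  change (x :: m ++ [b]) with ((x :: m) ++ [b]).
  rewrite last_last, <- app_assoc; simpl app at 2.
  rewrite (path_app (x :: m) b [y]); simpl; tauto.
Qed.

Lemma path_loop A u X B :
  path (A ++ u :: X ++ u :: B) <->
  path (A ++ [u]) /\ path (u :: X ++ [u]) /\ path (u :: B).
Proof.
  rewrite (path_app A u); pose proof (path_app (u :: X) u B) as E.
  simpl app in E; rewrite E; tauto.
Qed.

Lemma path_remove_loop A u X B :
  path (A ++ u :: X ++ u :: B) -> path (A ++ u :: B).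
Proof. intros H; apply path_loop in H; apply path_app; tauto. Qed.

Hypothesis adj_sym : forall x y, adj x y -> adj y x.

Lemma path_rev l : path l -> path (rev l).
Proof.
  induction l as [|a [|b l] IH]; simpl; intros H; auto.
  destruct H as [Hab H]; rewrite <- app_assoc; apply path_app.
  split; [exact (IH H)|simpl; auto].
Qed.

Definition retrace (x : V) (p : list V) : list V := tl (rev (x :: p)).

Lemma rev_retrace x p : rev (x :: p) = last (x :: p) x :: retrace x p.
Proof.
  unfold retrace; induction p as [|b p _] using rev_ind; [reflexivity|].
  rewrite app_comm_cons, last_last, rev_app_distr; reflexivity.
Qed.

Lemma retrace_path x p : path (x :: p) -> path (last (x :: p) x :: retrace x p).
Proof. rewrite <- rev_retrace; apply path_rev. Qed.

Lemma last_retrace x p d : last (last (x :: p) x :: retrace x p) d = x.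
Proof. rewrite <- rev_retrace; simpl; apply last_last. Qed.

Lemma length_retrace x p : length (retrace x p) = length p.
Proof.
  pose proof (f_equal (@length V) (rev_retrace x p)) as E.
  rewrite length_rev in E; simpl in E; lia.
Qed.

Lemma in_retrace x p z : In z (retrace x p) -> In z (x :: p).
Proof. intros Hz; apply in_rev; rewrite rev_retrace; now right. Qed.

End Paths.

Section Homotopy.
Variables (V : Type) (adj : V -> V -> Prop) (cell : list V -> Prop).
Notation path := (is_path adj).
Notation htpy := (clos_refl_sym_trans _ (hstep adj cell)).

Lemma hstep_inv a b : hstep adj cell a b ->
  exists A u X B, a = A ++ u :: X ++ u :: B /\ b = A ++ u :: B /\ path a /\
    ((exists v, X = [v]) \/ cell (u :: X)).
Proof.
  destruct 1 as [p q u v Hp|p q v c Hc Hp].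
  - exists p, u, [v], q; repeat split; eauto.
  - exists p, v, c, q; repeat split; eauto.
Qed.

Lemma htpy_path a b : htpy a b -> path a <-> path b.
Proof.
  induction 1 as [a b H| | |]; try tauto.
  destruct (hstep_inv H) as (A & u & X & B & -> & -> & Hp & _).
  split; [intros; eapply path_remove_loop; eauto|tauto].
Qed.

Lemma hstep_intro A u X B :
  path (A ++ u :: X ++ u :: B) -> (exists v, X = [v]) \/ cell (u :: X) ->
  hstep adj cell (A ++ u :: X ++ u :: B) (A ++ u :: B).
Proof. intros Hp [[v ->]|Hc]; constructor; assumption. Qed.

Lemma htpy_app_ctx a b : htpy a b -> forall P Q,
  (path (P ++ a ++ Q) <-> path (P ++ b ++ Q)) /\
  (path (P ++ a ++ Q) -> htpy (P ++ a ++ Q) (P ++ b ++ Q)).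
Proof.
  induction 1 as [a b H|a|a b _ IH|a b c _ IH1 _ IH2]; intros P Q.
  - destruct (hstep_inv H) as (A & u & X & B & -> & -> & Hp & Hcell).
    replace (P ++ (A ++ u :: X ++ u :: B) ++ Q)
      with ((P ++ A) ++ u :: X ++ u :: (B ++ Q)) by app_eq.
    replace (P ++ (A ++ u :: B) ++ Q) with ((P ++ A) ++ u :: (B ++ Q)) by app_eq.
    rewrite path_loop in Hp; rewrite path_loop, (path_app adj (P ++ A) u (B ++ Q)).
    split; [tauto|intros HPQ; apply rst_step, hstep_intro; [apply path_loop|]; tauto].
  - split; [tauto|intros; apply rst_refl].
  - destruct (IH P Q) as [E Hab]; split; [tauto|].
    intros Hp; apply rst_sym, Hab; tauto.
  - destruct (IH1 P Q) as [E1 H1], (IH2 P Q) as [E2 H2]; split; [tauto|].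
    intros Hp; apply rst_trans with (P ++ b ++ Q); auto; apply H2; tauto.
Qed.

Lemma htpy_ctx a b P Q :
  htpy a b -> path (P ++ a ++ Q) -> htpy (P ++ a ++ Q) (P ++ b ++ Q).
Proof. intros H; apply (htpy_app_ctx H). Qed.

Lemma htpy_backtrack q a P Q : path (P ++ rev q ++ a :: q ++ Q) ->
  htpy (P ++ rev q ++ a :: q ++ Q) (P ++ last (a :: q) a :: Q).
Proof.
  revert a; induction q as [|b q IH]; intros a Hp; [apply rst_refl|].
  replace (P ++ rev (b :: q) ++ a :: (b :: q) ++ Q)
    with ((P ++ rev q) ++ b :: [a] ++ b :: (q ++ Q)) in * by app_eq.
  apply rst_trans with ((P ++ rev q) ++ b :: q ++ Q).
  - apply rst_step, hstep_back, Hp.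
  - apply path_remove_loop in Hp; rewrite <- app_assoc in *.
    rewrite (last_cons_default _ _ a b); exact (IH b Hp).
Qed.

Lemma htpy_retrace P x p Q : path (P ++ x :: p ++ retrace x p ++ Q) ->
  htpy (P ++ x :: p ++ retrace x p ++ Q) (P ++ x :: Q).
Proof.
  assert (E : P ++ x :: p ++ retrace x p ++ Q =
              P ++ rev (retrace x p) ++ last (x :: p) x :: retrace x p ++ Q).
  { pose proof (f_equal (@rev V) (rev_retrace x p)) as R.
    rewrite rev_involutive in R; simpl in R.
    rewrite app_comm_cons; rewrite R at 1; app_eq. }
  rewrite E; intros Hp.
  pose proof (htpy_backtrack Hp) as H; rewrite last_retrace in H; exact H.
Qed.

Lemma htpy_remove_loop x al Z :
  last (x :: al) x = x -> path (x :: al ++ Z) ->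
  (forall c, edge_loop adj c -> incl c (x :: al) -> length c <= length al -> cell c) ->
  htpy (x :: al ++ Z) (x :: Z).
Proof.
  induction al as [|a al _] using rev_ind; intros Hl Hp Hcell; [apply rst_refl|].
  rewrite app_comm_cons, last_last in Hl; subst a.
  rewrite <- app_assoc in Hp |- *.
  apply rst_step, (hstep_cell (p := [])); [apply Hcell|exact Hp].
  - apply (path_app adj (x :: al)) in Hp; apply path_snoc, Hp.
  - intros z Hz; rewrite app_comm_cons; apply in_or_app; now left.
  - rewrite length_app; simpl; lia.
Qed.

Hypothesis adj_sym : forall x y, adj x y -> adj y x.

Lemma htpy_swap_snoc x al be b Z :
  path (x :: al ++ b :: Z) -> path (x :: be ++ [b]) ->
  (edge_loop adj (x :: al ++ b :: rev be) -> cell (x :: al ++ b :: rev be)) ->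
  htpy (x :: al ++ b :: Z) (x :: be ++ b :: Z).
Proof.
  intros Hpa Hpb Hcell.
  apply (path_app adj (x :: al)) in Hpa as [Hxa HbZ].
  assert (Hrev : path (b :: rev be ++ [x])).
  { pose proof (path_rev adj_sym Hpb) as R.
    rewrite app_comm_cons, rev_app_distr in R; exact R. }
  assert (Hloop : path (x :: (al ++ b :: rev be) ++ [x])).
  { rewrite <- app_assoc; apply (path_app adj (x :: al)); auto. }
  assert (HM : path (x :: al ++ b :: rev be ++ x :: be ++ b :: Z)).
  { apply (path_app adj (x :: al)); split; [exact Hxa|].
    apply (path_app adj (b :: rev be)); split; [exact Hrev|].
    apply (path_app adj (x :: be)); split; [exact Hpb|exact HbZ]. }
  apply rst_trans with (x :: al ++ b :: rev be ++ x :: be ++ b :: Z).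
  - pose proof (htpy_backtrack (q := be ++ [b]) (a := x) (P := x :: al) (Q := Z)) as H.
    rewrite last_cons_snoc, rev_app_distr in H; simpl in H; rewrite <- !app_assoc in H.
    apply rst_sym, H, HM.
  - replace (x :: al ++ b :: rev be ++ x :: be ++ b :: Z)
      with ([] ++ x :: (al ++ b :: rev be) ++ x :: be ++ b :: Z) in * by app_eq.
    apply rst_step, hstep_cell; [apply Hcell, path_snoc, Hloop|exact HM].
Qed.

Lemma htpy_swap x al be Z :
  last (x :: al) x = last (x :: be) x -> path (x :: al ++ Z) -> path (x :: be) ->
  (forall c, edge_loop adj c -> incl c (x :: al ++ be) ->
     length c <= length al + length be -> cell c) ->
  htpy (x :: al ++ Z) (x :: be ++ Z).
Proof.
  induction be as [|b be _] using rev_ind; intros Hl Hpa Hpb Hcell.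
  { apply htpy_remove_loop; [exact Hl|exact Hpa|].
    intros c Hc Hinc Hlen; apply Hcell; rewrite ?app_nil_r; auto; lia. }
  rewrite last_cons_snoc in Hl.
  destruct al as [|a al _] using rev_ind.
  { simpl in Hl; subst b; apply rst_sym, htpy_remove_loop.
    - apply last_cons_snoc.
    - apply path_glue; [exact Hpb|]; rewrite last_cons_snoc; exact Hpa.
    - intros c Hc Hinc Hlen; apply Hcell; auto; simpl; lia. }
  rewrite last_cons_snoc in Hl; subst a; rewrite <- !app_assoc in *.
  apply htpy_swap_snoc; [exact Hpa|exact Hpb|intros Hc; apply Hcell; [exact Hc| |]].
  - intros z [<-|Hz]; [now left|right].
    rewrite in_app_iff in Hz |- *; simpl in Hz |- *; rewrite in_app_iff, <- in_rev in *.
    tauto.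
  - simpl; rewrite !length_app; simpl; rewrite length_rev; lia.
Qed.

End Homotopy.

Section PathImage.
Variables (W V : Type) (adjW : W -> W -> Prop) (adjV : V -> V -> Prop).
Variables (psi : W -> V) (seg : W -> W -> list V).

Fixpoint segs (x : W) (r : list W) : list V :=
  match r with [] => [] | y :: r' => seg x y ++ segs y r' end.

Definition img (l : list W) : list V :=
  match l with [] => [] | x :: r => psi x :: segs x r end.

Lemma segs_length K x r :
  (forall a b, adjW a b -> length (seg a b) <= K) -> is_path adjW (x :: r) ->
  length (segs x r) <= K * length r.
Proof.
  intros HK; revert x; induction r as [|y r IH]; intros x Hp; simpl; [lia|].
  destruct Hp as [Hxy Hp]; rewrite length_app.
  specialize (HK x y Hxy); specialize (IH y Hp); lia.
Qed.

Lemma in_segs (E : V -> Prop) x r z :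
  (forall a b z, In z (seg a b) -> z = psi b \/ E z) -> In z (segs x r) ->
  (exists y, In y r /\ z = psi y) \/ E z.
Proof.
  intros HE; revert x; induction r as [|y r IH]; intros x Hz; [contradiction|].
  apply in_app_iff in Hz as [Hz|Hz].
  - destruct (HE _ _ _ Hz) as [->|]; [left; exists y|]; simpl; auto.
  - destruct (IH _ Hz) as [(y' & Hy' & ->)|]; [left; exists y'|]; simpl; auto.
Qed.

Hypothesis seg_last : forall x y, last (psi x :: seg x y) (psi x) = psi y.
Hypothesis seg_path : forall x y, adjW x y -> is_path adjV (psi x :: seg x y).

Lemma segs_last x r : last (psi x :: segs x r) (psi x) = psi (last (x :: r) x).
Proof.
  revert x; induction r as [|y r IH]; intros x; [reflexivity|].
  change (psi x :: segs x (y :: r)) with ((psi x :: seg x y) ++ segs y r).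
  rewrite last_glue, seg_last, (last_cons_default _ _ _ (psi y)), IH.
  change (last (x :: y :: r) x) with (last (y :: r) x); f_equal; apply last_cons_default.
Qed.

Lemma segs_app a A B : segs a (A ++ B) = segs a A ++ segs (last (a :: A) a) B.
Proof.
  revert a; induction A as [|c A IH]; intros a; [reflexivity|].
  change (last (a :: c :: A) a) with (last (c :: A) a).
  cbn [segs app]; rewrite IH, app_assoc, (last_cons_default c A a c); reflexivity.
Qed.

Lemma img_path l : is_path adjW l -> is_path adjV (img l).
Proof.
  destruct l as [|x r]; [trivial|]; revert x.
  induction r as [|y r IH]; intros x Hp; [exact I|destruct Hp as [Hxy Hp]].
  apply path_glue; [exact (seg_path Hxy)|rewrite seg_last; exact (IH y Hp)].
Qed.

Lemma segs_split a X u B : segs a (X ++ u :: B) = segs a (X ++ [u]) ++ segs u B.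
Proof.
  replace (X ++ u :: B) with ((X ++ [u]) ++ B) by app_eq.
  rewrite segs_app, last_cons_snoc; reflexivity.
Qed.

Lemma img_split A u Y : img (A ++ u :: Y) = img (A ++ [u]) ++ segs u Y.
Proof.
  destruct A as [|a A]; [reflexivity|].
  cbn [img app]; rewrite segs_split; reflexivity.
Qed.

Lemma img_loop A u X B :
  img (A ++ u :: X ++ u :: B) = img (A ++ [u]) ++ segs u (X ++ [u]) ++ segs u B.
Proof. rewrite img_split, segs_split; reflexivity. Qed.

Lemma img_snoc A u : exists I, img (A ++ [u]) = I ++ [psi u].
Proof.
  destruct A as [|a A]; [exists []; reflexivity|].
  exists (removelast (psi a :: segs a (A ++ [u]))); cbn [img app].
  rewrite (cons_snoc_last (psi a)) at 1; rewrite segs_last, last_cons_snoc; reflexivity.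
Qed.

Lemma segs_loop u X :
  segs u (X ++ [u]) = [] \/ exists D, segs u (X ++ [u]) = D ++ [psi u].
Proof.
  destruct (segs u (X ++ [u])) as [|v l] eqn:E; [now left|right].
  exists (removelast (v :: l)).
  rewrite (cons_snoc_last v) at 1; f_equal; f_equal.
  rewrite (last_cons_default _ _ _ (psi u)).
  change (last (psi u :: v :: l) (psi u) = psi u).
  rewrite <- E, segs_last; apply f_equal, last_cons_snoc.
Qed.

Variables (cellW : list W -> Prop) (cellV : list V -> Prop).
Hypothesis cell_img : forall u X D, is_path adjW (u :: X ++ [u]) ->
  (exists v, X = [v]) \/ cellW (u :: X) ->
  segs u (X ++ [u]) = D ++ [psi u] -> cellV (psi u :: D).

Lemma htpy_img a b :
  clos_refl_sym_trans _ (hstep adjW cellW) a b ->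
  clos_refl_sym_trans _ (hstep adjV cellV) (img a) (img b).
Proof.
  induction 1 as [a b H| | |]; [|apply rst_refl|now apply rst_sym|eapply rst_trans; eauto].
  destruct (hstep_inv H) as (A & u & X & B & -> & -> & Hp & Hcell).
  pose proof (img_path Hp) as Hi; rewrite img_loop in Hi |- *; rewrite (img_split A u B).
  destruct (segs_loop u X) as [E|[D E]]; rewrite E in *; [apply rst_refl|].
  destruct (img_snoc A u) as [I EI]; rewrite EI in *.
  rewrite <- !app_assoc in *; simpl app in *.
  apply rst_step, hstep_cell; [|exact Hi].
  apply path_loop in Hp; apply (cell_img (X := X)); tauto.
Qed.

End PathImage.

Section Transfer.
Variables (V W : Type) (adjV : V -> V -> Prop) (adjW : W -> W -> Prop).
Variables (cellV : list V -> Prop) (cellW : list W -> Prop).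
Variables (phi : V -> W) (psi : W -> V).
Variables (segP : V -> V -> list W) (segQ : W -> W -> list V) (t : V -> list V).
Hypothesis adjV_sym : forall x y, adjV x y -> adjV y x.
Hypothesis segP_last : forall x y, last (phi x :: segP x y) (phi x) = phi y.
Hypothesis segP_path : forall x y, adjV x y -> is_path adjW (phi x :: segP x y).
Hypothesis segQ_last : forall x y, last (psi x :: segQ x y) (psi x) = psi y.
Hypothesis segQ_path : forall x y, adjW x y -> is_path adjV (psi x :: segQ x y).
Hypothesis t_path : forall x, is_path adjV (x :: t x).
Hypothesis t_last : forall x, last (x :: t x) x = psi (phi x).

Notation path := (is_path adjV).
Notation htpy := (clos_refl_sym_trans _ (hstep adjV cellV)).

Definition rho_edge x y := segs segQ (phi x) (segP x y).
Definition rho_path x r := segs segQ (phi x) (segs segP x r).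

Lemma rho_path_cons x y r : rho_path x (y :: r) = rho_edge x y ++ rho_path y r.
Proof. unfold rho_path, rho_edge; cbn [segs]; rewrite segs_app, segP_last; reflexivity. Qed.

Lemma tether_rho_edge_path x y : adjV x y -> path (x :: t x ++ rho_edge x y).
Proof.
  intros Hxy; apply path_glue; [apply t_path|rewrite t_last].
  exact (img_path (psi := psi) segQ_last segQ_path (segP_path Hxy)).
Qed.

Lemma tether_rho_edge_last x y : last (x :: t x ++ rho_edge x y) x = psi (phi y).
Proof.
  rewrite app_comm_cons, last_glue, t_last, (last_cons_default _ _ _ (psi (phi x))).
  unfold rho_edge; rewrite (segs_last segQ_last), segP_last; reflexivity.
Qed.

(* The square formed by the edge xy, the tethers at x and y, and the image of xy. *)
Hypothesis ladder_cell : forall x y, adjV x y -> forall c, edge_loop adjV c ->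
  incl c (x :: (y :: t y) ++ t x ++ rho_edge x y) ->
  length c <= length (y :: t y) + length (t x ++ rho_edge x y) -> cellV c.

Lemma ladder r x Q : path (x :: r ++ t (last (x :: r) x) ++ Q) ->
  htpy (x :: r ++ t (last (x :: r) x) ++ Q) (x :: t x ++ rho_path x r ++ Q).
Proof.
  revert x; induction r as [|y r IH]; intros x Hp; [apply rst_refl|].
  change (last (x :: y :: r) x) with (last (y :: r) x) in *.
  rewrite (last_cons_default _ _ _ y) in *.
  destruct Hp as [Hxy Hp].
  pose proof (htpy_ctx (P := [x]) (Q := []) (IH y Hp)) as H1.
  rewrite !app_nil_r in H1; specialize (H1 (conj Hxy Hp)).
  apply rst_trans with (x :: (y :: t y) ++ rho_path y r ++ Q); [exact H1|].
  rewrite rho_path_cons.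
  replace (t x ++ (rho_edge x y ++ rho_path y r) ++ Q)
    with ((t x ++ rho_edge x y) ++ rho_path y r ++ Q) by app_eq.
  apply htpy_swap; auto.
  - rewrite tether_rho_edge_last, <- t_last; apply (last_cons_default y).
  - apply (htpy_path H1); exact (conj Hxy Hp).
  - apply tether_rho_edge_path, Hxy.
  - apply ladder_cell, Hxy.
Qed.

Lemma tether_loop u p : last (u :: p) u = u -> path (u :: p ++ t u ++ retrace u (t u)) ->
  htpy (u :: p ++ t u ++ retrace u (t u)) (u :: p).
Proof.
  intros Hl; set (P := removelast (u :: p)).
  assert (E : u :: p = P ++ [u]) by (rewrite <- Hl at 2; apply cons_snoc_last).
  assert (E' : u :: p ++ t u ++ retrace u (t u) = P ++ u :: t u ++ retrace u (t u) ++ []).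
  { rewrite app_nil_r; change (u :: p ++ ?X) with ((u :: p) ++ X); rewrite E; app_eq. }
  rewrite E', E; apply htpy_retrace.
Qed.

Lemma transfer_connected :
  (forall a b, exists q, is_path adjW (a :: q) /\ last (a :: q) a = b) ->
  forall u v, exists p, path (u :: p) /\ last (u :: p) u = v.
Proof.
  intros HW u v; destruct (HW (phi u) (phi v)) as (q & Hq & Hl).
  assert (Hv : path (psi (phi v) :: retrace v (t v))).
  { rewrite <- (t_last v); exact (retrace_path adjV_sym (t_path v)). }
  exists (t u ++ segs segQ (phi u) q ++ retrace v (t v)); split.
  - apply path_glue; [apply t_path|rewrite t_last].
    apply path_glue; [exact (img_path (psi := psi) segQ_last segQ_path Hq)|].
    rewrite (segs_last segQ_last), Hl; exact Hv.
  - rewrite app_comm_cons, last_glue, t_last, (last_cons_default _ _ _ (psi (phi u))).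
    rewrite app_comm_cons, last_glue, (segs_last segQ_last), Hl, <- (t_last v).
    apply last_retrace.
Qed.

Hypothesis cell_img : forall u X D, is_path adjW (u :: X ++ [u]) ->
  (exists v, X = [v]) \/ cellW (u :: X) ->
  segs segQ u (X ++ [u]) = D ++ [psi u] -> cellV (psi u :: D).

Lemma htpy_rho_loop u p : simply_connected adjW cellW ->
  path (u :: p) -> last (u :: p) u = u ->
  htpy (psi (phi u) :: rho_path u p) [psi (phi u)].
Proof.
  intros [_ HW] Hp Hl.
  apply (htpy_img segQ_last segQ_path cell_img
    (a := phi u :: segs segP u p) (b := [phi u])).
  apply HW; [exact (img_path (psi := phi) segP_last segP_path Hp)|].
  rewrite (segs_last segP_last), Hl; reflexivity.
Qed.

Theorem transfer_simply_connected :
  simply_connected adjW cellW -> simply_connected adjV cellV.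
Proof.
  intros HW; split; [exact (transfer_connected (proj1 HW))|intros u p Hp Hl].
  set (s := retrace u (t u)).
  assert (Hs : path (u :: t u ++ s))
    by (apply path_glue; [apply t_path|exact (retrace_path adjV_sym (t_path u))]).
  assert (Hps : path (u :: p ++ t u ++ s)) by (apply path_glue; [|rewrite Hl]; assumption).
  assert (H1 : htpy (u :: p ++ t u ++ s) (u :: t u ++ rho_path u p ++ s)).
  { pose proof (@ladder p u s) as H; rewrite Hl in H; exact (H Hps). }
  assert (H2 : htpy (u :: t u ++ rho_path u p ++ s) (u :: t u ++ s)).
  { set (P := removelast (u :: t u)).
    assert (E : u :: t u = P ++ [psi (phi u)])
      by (rewrite <- (t_last u); apply cons_snoc_last).
    pose proof (proj1 (htpy_path H1) Hps) as Hrs.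
    change (u :: t u ++ ?X) with ((u :: t u) ++ X) in *; rewrite E, <- !app_assoc in *.
    exact (htpy_ctx (htpy_rho_loop HW Hp Hl) Hrs). }
  apply rst_trans with (u :: p ++ t u ++ s); 
    [exact (rst_sym _ _ _ _ (tether_loop Hl Hps))|].
  apply rst_trans with (u :: t u ++ s); [exact (rst_trans _ _ _ _ _ H1 H2)|].
  exact (@tether_loop u [] eq_refl Hs).
Qed.

End Transfer.


Section GroupLaws.
Variable G : group.

Lemma gmul_inv_r (x : G) : gmul x (ginv x) = gone.
Proof.
  transitivity (gmul (gmul (ginv (ginv x)) (ginv x)) (gmul x (ginv x))).
  - rewrite ginv_l, gone_l; reflexivity.
  - rewrite <- gassoc, (gassoc (ginv x) x), ginv_l, gone_l; apply ginv_l.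
Qed.

Lemma gmul_one_r (x : G) : gmul x gone = x.
Proof. rewrite <- (ginv_l x), gassoc, gmul_inv_r; apply gone_l. Qed.

Lemma gmul_cancel_l (a b c : G) : gmul a b = gmul a c -> b = c.
Proof.
  intros H; rewrite <- (gone_l b), <- (gone_l c), <- (ginv_l a), <- !gassoc, H.
  reflexivity.
Qed.

Lemma ginv_mul (x y : G) : ginv (gmul x y) = gmul (ginv y) (ginv x).
Proof.
  apply (gmul_cancel_l (a := gmul x y)); rewrite gmul_inv_r.
  rewrite <- gassoc, (gassoc y (ginv y)), gmul_inv_r, gone_l, gmul_inv_r; reflexivity.
Qed.

Lemma ginv_involutive (x : G) : ginv (ginv x) = x.
Proof. apply (gmul_cancel_l (a := ginv x)); rewrite gmul_inv_r, ginv_l; reflexivity. Qed.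

Lemma ginv_mul_cancel_l (x s : G) : gmul (ginv x) (gmul x s) = s.
Proof. rewrite gassoc, ginv_l; apply gone_l. Qed.

End GroupLaws.

Section WordMetric.
Variables (G : group) (S : list G).

Lemma wdist_spec x y : generates S ->
  wordlen S (wdist S x y) x y /\ forall m, wordlen S m x y -> wdist S x y <= m.
Proof.
  intros HS; unfold wdist; apply epsilon_spec.
  destruct (HS (gmul (ginv x) y)) as (w & Hw & Hp).
  destruct (dec_inh_nat_subset_has_unique_least_element (fun n => wordlen S n x y))
    as (n & Hn & _); [intros; apply classic|exists (length w), w; auto|].
  exists n; exact Hn.
Qed.

Lemma wdist_le_1 g g' : generates S ->
  In (gmul (ginv g) g') S \/ In (gmul (ginv g') g) S -> wdist S g g' <= 1.
Proof.
  intros HS Hadj; apply (wdist_spec g g' HS).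
  exists [gmul (ginv g) g']; repeat split; [|apply gmul_one_r].
  constructor; [|constructor].
  destruct Hadj; [left|right; rewrite ginv_mul, ginv_involutive]; assumption.
Qed.

End WordMetric.

(* Elaborate [inl g :: p] at the expected type [list (cvertex P)] rather than at
   [list (G + coset P)], so that rewriting with list lemmas matches syntactically. *)
Local Arguments cons {A} & _ _.

Definition is_gvertex (G : group) (I : Type) (P : I -> subgroup G) (v : cvertex P) : Prop :=
  exists g, v = inl g.

Section ConedOffCayleyGraph.
Variables (G : group) (S : list G) (I : Type) (P : I -> subgroup G).
Notation adj := (cadj S (P := P)).
Notation path := (is_path adj).

Lemma cadj_sym (x y : cvertex P) : adj x y -> adj y x.
Proof. destruct x, y; simpl; tauto. Qed.

Lemma word_path w x : Forall (letter S) w ->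
  exists p : list (cvertex P), path (inl x :: p) /\
    @last (cvertex P) (inl x :: p) (inl x) = inl (gmul x (wprod w)) /\
    length p = length w /\ forall z, In z p -> is_gvertex z.
Proof.
  revert x; induction w as [|s w IH]; intros x Hw.
  - exists []; repeat split; [simpl; rewrite gmul_one_r; reflexivity|contradiction].
  - inversion Hw as [|? ? Hs Hw']; subst.
    destruct (IH (gmul x s) Hw') as (p & Hp & Hl & Hlen & Hg).
    exists (inl (gmul x s) :: p); repeat split.
    + destruct Hs; [left; rewrite ginv_mul_cancel_l|right;
        rewrite ginv_mul, <- gassoc, ginv_l, gmul_one_r]; assumption.
    + exact Hp.
    + change (@last (cvertex P) (inl (gmul x s) :: p) (inl x) =
              inl (gmul x (gmul s (wprod w)))).
      rewrite (last_cons_default (V := cvertex P) _ _ _ (inl (gmul x s))), Hl, gassoc.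
      reflexivity.
    + simpl; congruence.
    + intros z [<-|Hz]; [eexists; reflexivity|auto].
Qed.

Lemma geodesic x y : generates S ->
  exists p : list (cvertex P), path (inl x :: p) /\
    @last (cvertex P) (inl x :: p) (inl x) = inl y /\ length p = wdist S x y /\
    forall z, In z p -> is_gvertex z.
Proof.
  intros HS; destruct (wdist_spec x y HS) as [(w & Hlen & Hw & Hxy) _].
  destruct (word_path x Hw) as (p & Hp & Hl & Hlen' & Hg).
  exists p; repeat split; auto; [|congruence].
  rewrite Hl, Hxy, gassoc, gmul_inv_r, gone_l; reflexivity.
Qed.

Lemma unicone_adj x y c : adj x y ->
  (forall A, In (inr A) c -> inr A = x \/ inr A = y) -> unicone c.
Proof.
  intros Hxy Hc A B HA HB.
  destruct (Hc A HA) as [<-|<-], (Hc B HB) as [EB|EB];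
    try (injection EB; auto); rewrite <- EB in Hxy; contradiction.
Qed.

End ConedOffCayleyGraph.

Definition vmap (G H : group) (I J : Type) (P : I -> subgroup G) (Q : J -> subgroup H)
  (f1 : G -> H) (f2 : coset P -> coset Q) (v : cvertex P) : cvertex Q :=
  match v with inl g => inl (f1 g) | inr A => inr (f2 A) end.

Definition edge_path (G H : group) (S : list G) (T : list H) (I J : Type)
  (P : I -> subgroup G) (Q : J -> subgroup H) (phi : cvertex P -> cvertex Q) (K : nat)
  (x y : cvertex P) (s : list (cvertex Q)) : Prop :=
  last (phi x :: s) (phi x) = phi y /\
  (forall z, In z s -> z = phi y \/ is_gvertex z) /\
  (cadj S x y -> is_path (cadj T (P := Q)) (phi x :: s) /\ length s <= K).

Definition tether (G : group) (S : list G) (I : Type) (P : I -> subgroup G)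
  (rho : cvertex P -> cvertex P) (K : nat) (x : cvertex P) (s : list (cvertex P)) : Prop :=
  is_path (cadj S (P := P)) (x :: s) /\ last (x :: s) x = rho x /\
  length s <= K /\ forall z, In z s -> is_gvertex z.

Section PairMaps.
Variables (G H : group) (S : list G) (T : list H) (I J : Type).
Variables (P : I -> subgroup G) (Q : J -> subgroup H).
Variables (L C M : R) (f1 : G -> H) (f2 : coset P -> coset Q).
Hypothesis genS : generates S.
Hypothesis genT : generates T.
Hypothesis Hf : lipschitz_pair S T L C M f1 f2.
Variable K : nat.
Hypothesis HK : (L + C + M < INR K)%R.
Notation phi := (vmap f1 f2).

Lemma wdist_lt_K d : (INR d < M)%R \/ (INR d <= L + C)%R -> d < K.
Proof. destruct Hf as (HL & HC & HM & _); intros Hd; apply INR_lt; lra. Qed.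

Lemma geodesic_in_coset g A : cmem A g ->
  exists h (p : list (cvertex Q)), cmem (f2 A) h /\
    is_path (cadj T (P := Q)) (phi (inl g) :: p) /\
    last (phi (inl g) :: p) (phi (inl g)) = inl h /\ length p < K /\
    forall z, In z p -> is_gvertex z.
Proof.
  intros Hg; destruct Hf as (_ & _ & _ & _ & Hhaus).
  destruct (proj1 (Hhaus A) (f1 g)) as (h & Hh & Hd); [exists g; auto|].
  destruct (geodesic Q (f1 g) h genT) as (p & Hp & Hl & Hlen & Hz).
  exists h, p; repeat split; auto; rewrite Hlen; apply wdist_lt_K; auto.
Qed.

Lemma edge_image x y : cadj S x y -> exists s, edge_path S T phi K x y s.
Proof.
  destruct x as [g|A], y as [g'|A']; intros Hxy; simpl in Hxy; try contradiction.
  - destruct (geodesic Q (f1 g) (f1 g') genT) as (p & Hp & Hl & Hlen & Hz).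
    exists p; repeat split; [exact Hl|intros z Hz'; right; auto|exact Hp|].
    destruct Hf as (HL & _ & _ & Hlip & _).
    assert (Hd : (INR (wdist T (f1 g) (f1 g')) <= L + C)%R).
    { pose proof (le_INR _ _ (wdist_le_1 genS Hxy)); specialize (Hlip g g').
      simpl in *; nra. }
    rewrite Hlen; apply Nat.lt_le_incl, wdist_lt_K; auto.
  - destruct (geodesic_in_coset Hxy) as (h & p & Hh & Hp & Hl & Hlen & Hz).
    exists (p ++ [inr (f2 A')]); repeat split.
    + apply last_cons_snoc.
    + intros z Hz'; apply in_app_iff in Hz' as [Hz'|[<-|[]]]; auto.
    + apply path_glue; [exact Hp|rewrite Hl; simpl; auto].
    + rewrite length_app; simpl; lia.
  - destruct (geodesic_in_coset Hxy) as (h & p & Hh & Hp & Hl & Hlen & Hz).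
    exists (inl h :: retrace (phi (inl g')) p); repeat split.
    + change (last (inl h :: retrace (phi (inl g')) p) (phi (inr A)) = phi (inl g')).
      rewrite <- Hl; apply last_retrace.
    + intros z [<-|Hz']; [right; eexists; reflexivity|].
      apply in_retrace in Hz' as [<-|Hz']; right; [eexists; reflexivity|auto].
    + exact Hh.
    + rewrite <- Hl; exact (retrace_path (cadj_sym (S := T) (P := Q)) Hp).
    + simpl; rewrite length_retrace; lia.
Qed.

Lemma edge_paths_choice : exists seg, forall x y, edge_path S T phi K x y (seg x y).
Proof.
  assert (Hs : forall x y, exists s, edge_path S T phi K x y s).
  { intros x y; destruct (classic (cadj S x y)) as [Hxy|Hxy]; [exact (edge_image Hxy)|].
    exists [phi y]; repeat split; [intros z [<-|[]]; auto|contradiction..]. }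
  destruct (choice _ (fun x => choice _ (Hs x))) as [seg Hseg].
  exists seg; intros x y; apply Hseg.
Qed.

End PairMaps.

Lemma edge_paths_exist (G H : group) (S : list G) (T : list H) (I J : Type)
  (P : I -> subgroup G) (Q : J -> subgroup H) (L C M : R)
  (f1 : G -> H) (f2 : coset P -> coset Q) :
  generates S -> generates T -> lipschitz_pair S T L C M f1 f2 ->
  exists K seg, forall x y, edge_path S T (vmap f1 f2) K x y (seg x y).
Proof.
  intros genS genT Hf; destruct (INR_unbounded (L + C + M)) as [K HK].
  exists K; exact (edge_paths_choice genS genT Hf HK).
Qed.

Lemma tethers_exist (G H : group) (S : list G) (I J : Type)
  (P : I -> subgroup G) (Q : J -> subgroup H) (C : R)
  (f1 : G -> H) (f2 : coset P -> coset Q) (r1 : H -> G) (r2 : coset Q -> coset P) :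
  generates S -> (forall g, INR (wdist S (r1 (f1 g)) g) <= C)%R ->
  (forall A, r2 (f2 A) = A) ->
  exists K t, forall x, tether S (fun x => vmap r1 r2 (vmap f1 f2 x)) K x (t x).
Proof.
  intros genS Hrf Hrf2; destruct (INR_unbounded C) as [K HK]; exists K.
  assert (Ht : forall x, exists s, tether S (fun x => vmap r1 r2 (vmap f1 f2 x)) K x s).
  { intros [g|A].
    - destruct (geodesic P (r1 (f1 g)) g genS) as (p & Hp & Hl & Hlen & Hz).
      pose proof (retrace_path (cadj_sym (S := S) (P := P)) Hp) as Hb.
      pose proof (last_retrace (V := cvertex P) (inl (r1 (f1 g))) p (inl g)) as Hlb.
      rewrite Hl in Hb, Hlb; exists (retrace (V := cvertex P) (inl (r1 (f1 g))) p).
      repeat split; auto.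
      + specialize (Hrf g); rewrite length_retrace, Hlen.
        apply Nat.lt_le_incl, INR_lt; lra.
      + intros z Hz'; apply in_retrace in Hz' as [<-|]; [eexists; reflexivity|auto].
    - exists []; repeat split; [cbn; rewrite Hrf2; reflexivity|simpl; lia|contradiction]. }
  destruct (choice _ Ht) as [t Htx]; exists t; exact Htx.
Qed.

Lemma vmap_inr (G H : group) (I J : Type) (P : I -> subgroup G) (Q : J -> subgroup H)
  (f1 : G -> H) (f2 : coset P -> coset Q) v A :
  vmap f1 f2 v = inr A -> exists B, v = inr B /\ A = f2 B.
Proof. destruct v as [g|B]; simpl; intros E; [discriminate|injection E as <-; eauto]. Qed.

Lemma unicone_map (G H : group) (I J : Type) (P : I -> subgroup G) (Q : J -> subgroup H)
  (f : coset Q -> coset P) (c : list (cvertex Q)) (c' : list (cvertex P)) :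
  unicone c -> (forall A, In (inr A) c' -> exists B, In (inr B) c /\ A = f B) ->
  unicone c'.
Proof.
  intros Hc Hc' A1 A2 H1 H2.
  destruct (Hc' A1 H1) as (B1 & HB1 & ->), (Hc' A2 H2) as (B2 & HB2 & ->).
  f_equal; apply Hc; assumption.
Qed.

Section ConeTransfer.
Variables (G H : group) (S : list G) (T : list H) (I J : Type).
Variables (P : I -> subgroup G) (Q : J -> subgroup H).
Variables (f1 : G -> H) (f2 : coset P -> coset Q) (r1 : H -> G) (r2 : coset Q -> coset P).
Variables (K1 K2 K3 lH : nat) (segf : cvertex P -> cvertex P -> list (cvertex Q))
  (segr : cvertex Q -> cvertex Q -> list (cvertex P)) (t : cvertex P -> list (cvertex P)).
Notation phi := (vmap f1 f2).
Notation psi := (vmap r1 r2).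
Hypothesis Hsegf : forall x y, edge_path S T phi K1 x y (segf x y).
Hypothesis Hsegr : forall x y, edge_path T S psi K2 x y (segr x y).
Hypothesis Ht : forall x, tether S (fun x => psi (phi x)) K3 x (t x).
Hypothesis Hrf2 : forall A, r2 (f2 A) = A.

Lemma segs_cones u r A : In (inr A) (segs segr u r) ->
  exists y, In y r /\ inr A = psi y.
Proof.
  intros HA; destruct (in_segs (psi := psi) (E := is_gvertex (P := P))
    (fun a b z Hz => proj1 (proj2 (Hsegr a b)) z Hz) HA) as [Hy|[g Hg]];
    [exact Hy|discriminate].
Qed.

Lemma rho_edge_cones x y A : In (inr A) (rho_edge phi segf segr x y) -> inr A = y.
Proof.
  intros HA; destruct (segs_cones HA) as (y' & Hy' & E).
  symmetry in E; destruct (vmap_inr E) as (B & -> & ->).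
  destruct (proj1 (proj2 (Hsegf x y)) _ Hy') as [E'|[g Hg]]; [|discriminate].
  destruct (vmap_inr (eq_sym E')) as (B' & -> & ->); rewrite Hrf2; reflexivity.
Qed.

Lemma rho_edge_length x y : cadj S x y -> length (rho_edge phi segf segr x y) <= K2 * K1.
Proof.
  intros Hxy; destruct (proj2 (proj2 (Hsegf x y)) Hxy) as [Hp Hlen].
  eapply Nat.le_trans; [apply (segs_length (adjW := cadj T (P := Q)))|].
  - intros a b Hab; apply (proj2 (proj2 (Hsegr a b)) Hab).
  - exact Hp.
  - apply Nat.mul_le_mono_l, Hlen.
Qed.

Lemma tether_no_cone x A : ~ In (inr A) (t x).
Proof. intros HA; destruct (proj2 (proj2 (proj2 (Ht x))) _ HA) as [g Hg]; discriminate. Qed.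

Lemma ladder_ucell l : 2 * K3 + K2 * K1 + 1 < l ->
  forall x y, cadj S x y -> forall c, edge_loop (cadj S (P := P)) c ->
  incl c (x :: (y :: t y) ++ t x ++ rho_edge phi segf segr x y) ->
  length c <= length (y :: t y) + length (t x ++ rho_edge phi segf segr x y) ->
  ucell S l c.
Proof.
  intros Hl x y Hxy c Hc Hinc Hlen; split; [exact Hc|split].
  - apply (unicone_adj Hxy); intros A HA; apply Hinc in HA as [HA|[HA|HA]]; auto.
    apply in_app_iff in HA as [HA|HA]; [contradiction (tether_no_cone HA)|].
    apply in_app_iff in HA as [HA|HA]; [contradiction (tether_no_cone HA)|].
    right; exact (rho_edge_cones HA).
  - pose proof (rho_edge_length Hxy) as Hrho.
    destruct (Ht x) as (_ & _ & Htx & _), (Ht y) as (_ & _ & Hty & _).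
    rewrite length_app in Hlen; simpl in Hlen; lia.
Qed.

Lemma image_ucell l : K2 * (lH + 2) < l ->
  forall u X D, is_path (cadj T (P := Q)) (u :: X ++ [u]) ->
  (exists v, X = [v]) \/ ucell T lH (u :: X) ->
  segs segr u (X ++ [u]) = D ++ [psi u] -> ucell S l (psi u :: D).
Proof.
  intros Hl u X D Hp Hcell E.
  assert (Hloop : is_path (cadj S (P := P)) (psi u :: D ++ [psi u])).
  { rewrite <- E; exact (img_path (psi := psi) (fun x y => proj1 (Hsegr x y))
      (fun x y Hxy => proj1 (proj2 (proj2 (Hsegr x y)) Hxy)) Hp). }
  split; [exact (proj1 (path_snoc _ _ _ _) Hloop)|split].
  - apply (unicone_map (f := r2) (c := u :: X)).
    + destruct Hcell as [[v ->]|(_ & Hu & _)]; [|exact Hu].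
      apply (unicone_adj (proj1 Hp)); intros A [HA|[HA|[]]]; auto.
    + intros A [HA|HA].
      * destruct (vmap_inr HA) as (B & -> & ->); exists B; simpl; auto.
      * assert (HA' : In (inr A) (segs segr u (X ++ [u])))
          by (rewrite E; apply in_or_app; auto).
        destruct (segs_cones HA') as (y & Hy & Ey); symmetry in Ey.
        destruct (vmap_inr Ey) as (B & -> & ->); exists B; split; auto.
        apply in_app_iff in Hy; simpl in *; tauto.
  - assert (Hs : length (segs segr u (X ++ [u])) <= K2 * length (X ++ [u])).
    { apply (segs_length (adjW := cadj T (P := Q))); [|exact Hp].
      intros a b Hab; apply (proj2 (proj2 (Hsegr a b)) Hab). }
    assert (HX : length (X ++ [u]) <= lH + 2).
    { rewrite length_app; destruct Hcell as [[v ->]|(_ & _ & Hc)]; simpl in *; lia. }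
    rewrite E, length_app in Hs; simpl in *.
    pose proof (Nat.mul_le_mono_l _ _ K2 HX); lia.
Qed.

Theorem coarsely_unicone_sc_transfer :
  simply_connected (cadj T (P := Q)) (ucell T lH) -> coarsely_unicone_sc S P.
Proof.
  intros HW; exists (K2 * (lH + 2) + K2 * K1 + 2 * K3 + 2).
  apply (transfer_simply_connected (phi := phi) (psi := psi) (segP := segf) (segQ := segr)
    (t := t) (adjW := cadj T (P := Q)) (cellW := ucell T lH)); try assumption.
  - apply cadj_sym.
  - intros x y; apply Hsegf.
  - intros x y Hxy; apply Hsegf, Hxy.
  - intros x y; apply Hsegr.
  - intros x y Hxy; apply Hsegr, Hxy.
  - intros x; apply Ht.
  - intros x; apply Ht.
  - apply ladder_ucell; lia.
  - apply image_ucell; lia.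
Qed.

End ConeTransfer.

Theorem lemma4p9 (G H : group) (I J : Type)
  (P : I -> subgroup G) (Q : J -> subgroup H) (S : list G) (T : list H) :
  Finite I -> inhabited I -> Finite J -> inhabited J ->
  generates S -> generates T ->
  quasi_retract S T P Q ->
  coarsely_unicone_sc T Q ->
  coarsely_unicone_sc S P.
Proof.
  intros _ _ _ _ genS genT (L & C & M & f1 & f2 & r1 & r2 & Hf & Hr & Hrf & Hrf2) [lH HW].
  destruct (edge_paths_exist genS genT Hf) as (K1 & segf & Hsegf).
  destruct (edge_paths_exist genT genS Hr) as (K2 & segr & Hsegr).
  destruct (tethers_exist genS Hrf Hrf2) as (K3 & t & Ht).
  exact (coarsely_unicone_sc_transfer Hsegf Hsegr Ht Hrf2 HW).
Qed.
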